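(* Under the hypotheses in the context (decomposition of $\mathcal X$ over $A$, $g\in\mathcal G_s$, integer $T>0$, and $\operatorname{argmin}_{u\in\mathcal U} J^*_{t+1}(Ax+Bu)\cap[\bigoplus_{i\in\mathcal I}\mathcal E_i]\neq\emptyset$ for all $x\in\mathcal X$ and $t\in\{0,\dots,T-1\}$), the optimal cost $J^*=J^*_0$ of the finite-horizon problem $(A,B,g,T)$ belongs to $\mathcal G_s$, i.e. $J^*(x)=\sum_{i\in\mathcal I}J^*(\rho_i(x))$ for all $x\in\mathcal X$.
   Context: Let $\mathcal F$ be a field and $\mathcal X,\mathcal U$ finite-dimensional vector spaces over $\mathcal F$. Let $A:\mathcal X\to\mathcal X$ and $B:\mathcal U\to\mathcal X$ be linear maps with $B$ injective, and let $g:\mathcal X\to\mathbb R_{\ge0}$ satisfy $g(x)=0\iff x=0$. Standing assumption: all minima appearing below are attained. For the finite-horizon problem $(A,B,g,T)$ associated with $x_{t+1}=Ax_t+Bu_t$ (cost $\sum_{t=0}^Tg(x_t)$ minimized over input sequences $u_0,\dots,u_{T-1}$), the cost-to-go functions are $J^*_T=g$ and $J^*_t(x)=g(x)+\min_{u\in\mathcal U}J^*_{t+1}(Ax+Bu)$, and the optimal cost is $J^*=J^*_0$. A decomposition of $\mathcal X$ over $A$ is a direct sum $\mathcal X=\mathcal X_1\oplus\cdots\oplus\mathcal X_r$ with $r>1$ and $A\mathcal X_i\subseteq\mathcal X_i$ for all $i\in\mathcal I=\{1,\dots,r\}$; $\rho_i:\mathcal X\to\mathcal X_i$ is the projection along the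 other summands. $\mathcal G_s$ is the set of $h:\mathcal X\to\mathbb R_{\ge0}$ with $h(x)=\sum_i h(\rho_i(x))$ for all $x$. $\mathcal E_i=\{u\in\mathcal U:Bu\in\mathcal X_i\}$. *)

From HB Require Import structures.
From mathcomp Require Import all_boot all_order all_algebra.
From Stdlib Require Import ClassicalEpsilon.
Set Implicit Arguments. Unset Strict Implicit. Unset Printing Implicit Defensive.
Import Order.TTheory GRing.Theory Num.Theory.
Local Open Scope ring_scope.

Definition is_argmin (U : Type) (R : realFieldType) (f : U -> R) (u : U) : Prop :=
  forall u', f u <= f u'.

(* min_u f u, chosen by classical choice; equals the minimum whenever the
   minimum is attained (the paper's standing assumption). *)
Definition minval (U : Type) (u0 : U) (R : realFieldType) (f : U -> R) : R :=
  f (epsilon (inhabits u0) (is_argmin f)).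

Fixpoint ctg (F : fieldType) (vT uT : vectType F) (R : realFieldType)
    (A : 'End(vT)) (B : 'Hom(uT, vT)) (g : vT -> R) (k : nat) (x : vT) : R :=
  match k with
  | 0 => g x
  | k'.+1 => g x + minval 0 (fun u => ctg A B g k' (A x + B u))
  end.

Definition Jstar (F : fieldType) (vT uT : vectType F) (R : realFieldType)
    (A : 'End(vT)) (B : 'Hom(uT, vT)) (g : vT -> R) (T t : nat) : vT -> R :=
  ctg A B g (T - t).

Definition in_Gs (F : fieldType) (vT : vectType F) (R : realFieldType) (r : nat)
    (rho : 'I_r -> vT -> vT) (h : vT -> R) : Prop :=
  (forall x, 0 <= h x) /\ (forall x, h x = \sum_(i < r) h (rho i x)).

From HB Require Import structures.
From mathcomp Require Import all_boot all_order all_algebra.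
From Stdlib Require Import ClassicalEpsilon.
From mathcomp Require Import zify.

Set Implicit Arguments.
Unset Strict Implicit.
Unset Printing Implicit Defensive.
Import Order.TTheory GRing.Theory Num.Theory.
Local Open Scope ring_scope.

(* Since [A] preserves each [X_i], the projections [rho_i] commute with [A]; if
   moreover a control [u = \sum_i u_i] with [B u_i \in X_i] is used, the next
   state splits componentwise: [rho_i (A x + B u) = A (rho_i x) + B u_i].  For
   a cost-to-go [h] in [G_s] the one-step cost [u |-> h (A x + B u)] therefore
   splits into [r] independent problems, one per component [rho_i x], and the
   hypothesis that some minimizer lies in [E_1 + ... + E_r] makes the minimum
   split in the same way.  Backward induction over the horizon then keeps
   every [J*_t] in [G_s]. *)

Lemma minval_le (U : Type) (u0 : U) (R : realFieldType) (f : U -> R) :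
  (exists u, is_argmin f u) -> forall u, minval u0 f <= f u.
Proof. by move=> ex_u; exact: epsilon_spec (inhabits u0) (is_argmin f) ex_u. Qed.

Lemma minval_argmin (U : Type) (u0 : U) (R : realFieldType) (f : U -> R) u :
  is_argmin f u -> minval u0 f = f u.
Proof.
by move=> f_min; apply/eqP; rewrite eq_le f_min minval_le //; exists u.
Qed.

Arguments minval_le {U} u0 {R f}.
Arguments minval_argmin {U} u0 {R f u}.

Section DirectSumProjections.
Variables (F : fieldType) (vT : vectType F) (r : nat) (Xs : 'I_r -> {vspace vT}).
Variables (defX : fullv = (\sum_(i < r) Xs i)%VS) (dirX : directv (\sum_(i < r) Xs i)).

Local Notation rho := (sumv_pi_for defX).

Lemma sum_sumv_pi v : \sum_i rho i v = v.
Proof. by apply: sumv_pi_sum; rewrite memvf. Qed.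

Lemma sumv_pi_decomp (vs : 'I_r -> vT) :
  (forall i, vs i \in Xs i) -> forall i, rho i (\sum_j vs j) = vs i.
Proof.
move=> Xvs i; have /directv_sum_unique uniq_decomp := dirX.
have := uniq_decomp (fun j => rho j (\sum_j vs j)) vs
  (fun j _ => memv_sum_pi _ j _) (fun j _ => Xvs j).
by rewrite sum_sumv_pi eqxx => /esym/forall_inP/(_ i isT)/eqP.
Qed.

Lemma sumv_pi_id i v : v \in Xs i -> rho i v = v.
Proof.
move=> Xv; have Dv : v = \sum_j (if j == i then v else 0).
  by rewrite (bigD1 i) //= eqxx big1 ?addr0 // => j /negPf->.
rewrite {1}Dv sumv_pi_decomp ?eqxx // => j.
by case: eqP => [->|_]; rewrite ?mem0v.
Qed.

Lemma sumv_pi_comm (A : 'End(vT)) :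
  (forall i, (A @: Xs i <= Xs i)%VS) -> forall i v, rho i (A v) = A (rho i v).
Proof.
move=> AXs i v; rewrite -{1}(sum_sumv_pi v) linear_sum sumv_pi_decomp // => j.
exact: subvP (AXs j) _ (memv_img _ (memv_sum_pi _ j v)).
Qed.

End DirectSumProjections.

Section CostToGoDecomposition.
Variables (F : fieldType) (vT uT : vectType F) (R : realFieldType).
Variables (A : 'End(vT)) (B : 'Hom(uT, vT)).
Variables (r : nat) (Xs : 'I_r -> {vspace vT}).
Variables (defX : fullv = (\sum_(i < r) Xs i)%VS) (dirX : directv (\sum_(i < r) Xs i)).
Hypothesis AXs : forall i, (A @: Xs i <= Xs i)%VS.

Local Notation rho := (sumv_pi_for defX).
Local Notation Es := (\sum_(i < r) (B @^-1: Xs i))%VS.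

Definition argmin_meets_Es (h : vT -> R) :=
  forall x, exists2 u, u \in Es & is_argmin (fun u => h (A x + B u)) u.

Lemma memv_Es u : u \in Es ->
  exists2 us : 'I_r -> uT, (forall i, B (us i) \in Xs i) & u = \sum_i us i.
Proof.
by case/memv_sumP=> us Eus ->; exists us => // i; rewrite memv_preim Eus.
Qed.

Lemma sumv_pi_step i x (us : 'I_r -> uT) : (forall j, B (us j) \in Xs j) ->
  rho i (A x + B (\sum_j us j)) = A (rho i x) + B (us i).
Proof.
by move=> Xus; rewrite linearD /= sumv_pi_comm // linear_sum sumv_pi_decomp.
Qed.

Variable g : vT -> R.
Hypothesis g_Gs : in_Gs rho g.

Section BellmanStep.
Variable h : vT -> R.
Hypothesis (h_Gs : in_Gs rho h) (h_min : argmin_meets_Es h).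

Lemma step_cost_split x (us : 'I_r -> uT) : (forall j, B (us j) \in Xs j) ->
  h (A x + B (\sum_j us j)) = \sum_i h (A (rho i x) + B (us i)).
Proof.
by move=> Xus; rewrite h_Gs.2; apply: eq_bigr => i _; rewrite sumv_pi_step.
Qed.

(* Of a minimizer [\sum_j u_j] for the component [rho_i x], only [u_i] acts on
   [X_i]; the other summands only add nonnegative cost. *)
Lemma argmin_component i x :
  exists2 u, B u \in Xs i & is_argmin (fun u => h (A (rho i x) + B u)) u.
Proof.
have [w /memv_Es[ws Xws ->] w_min] := h_min (rho i x).
exists (ws i) => // u; apply: le_trans (w_min u).
rewrite step_cost_split // (bigD1 i) //= (sumv_pi_id defX dirX (memv_sum_pi _ i x)).
by rewrite lerDl sumr_ge0 // => j _; exact: h_Gs.1.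
Qed.

Lemma minval_split x : minval 0 (fun u => h (A x + B u)) =
  \sum_i minval 0 (fun u => h (A (rho i x) + B u)).
Proof.
apply/eqP; rewrite eq_le; apply/andP; split.
  have [us Xus us_min] := fin_all_exists2 (argmin_component^~ x).
  apply: le_trans (minval_le 0 _ (\sum_i us i)) _.
    by have [u _ u_min] := h_min x; exists u.
  by rewrite step_cost_split // ler_sum // => i _; rewrite (minval_argmin 0 (us_min i)).
have [u /memv_Es[us Xus ->] u_min] := h_min x.
rewrite (minval_argmin 0 u_min) /= step_cost_split // ler_sum // => i _.
by have [v _ v_min] := argmin_component i x; apply: minval_le; exists v.
Qed.

Lemma bellman_step_Gs :
  in_Gs rho (fun x => g x + minval 0 (fun u => h (A x + B u))).
Proof.
split=> [x | x].
  have [u _ u_min] := h_min x.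
  by rewrite (minval_argmin 0 u_min) addr_ge0 ?g_Gs.1 ?h_Gs.1.
by rewrite big_split /= -g_Gs.2 minval_split.
Qed.

End BellmanStep.

Lemma ctg_Gs T : (forall k, (k < T)%N -> argmin_meets_Es (ctg A B g k)) ->
  forall k, (k <= T)%N -> in_Gs rho (ctg A B g k).
Proof.
move=> ctg_min; elim=> [_ | k IHk kT] //.
exact: bellman_step_Gs (IHk (ltnW kT)) (ctg_min k kT).
Qed.

End CostToGoDecomposition.

Theorem corollary1 (F : fieldType) (vT uT : vectType F) (R : realFieldType)
    (A : 'End(vT)) (B : 'Hom(uT, vT))
    (* B injective *)
    (HB : injective B)
    (g : vT -> R)
    (Hg0 : forall x, 0 <= g x) (Hgz : forall x, g x = 0 <-> x = 0)
    (* decomposition of X over A *)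
    (r : nat) (Hr : (1 < r)%N) (Xs : 'I_r -> {vspace vT})
    (defX : fullv = (\sum_(i < r) Xs i)%VS)
    (Hdir : directv (\sum_(i < r) Xs i))
    (HAinv : forall i, (A @: Xs i <= Xs i)%VS)
    (* g in G_s, where rho_i = sumv_pi_for defX i *)
    (HgGs : in_Gs (sumv_pi_for defX) g)
    (T : nat) (HT : (0 < T)%N)
    (* standing assumption: all minima are attained *)
    (Hatt : forall t, (t < T)%N -> forall x,
        exists u, is_argmin (fun u => Jstar A B g T t.+1 (A x + B u)) u)
    (* argmin meets the direct sum of the E_i = B^{-1}(X_i) *)
    (Hargmin : forall t, (t < T)%N -> forall x,
        exists2 u, u \in (\sum_(i < r) (B @^-1: Xs i))%VS &
          is_argmin (fun u => Jstar A B g T t.+1 (A x + B u)) u) :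
  in_Gs (sumv_pi_for defX) (Jstar A B g T 0).
Proof.
rewrite /Jstar subn0; apply: (ctg_Gs Hdir HAinv HgGs _ (leqnn T)) => k kT x.
have tT : (T - k.+1 < T)%N by lia.
have Tk : (T - (T - k.+1).+1 = k)%N by lia.
by have := Hargmin _ tT x; rewrite /Jstar Tk.
Qed.
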